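(* Let $A\in\mathbb{R}^{n\times n}$ be symmetric, with Moore–Penrose pseudoinverse $A^\dagger$, and let $\|\cdot\|$ be the Frobenius norm. (i) The problem $\min_X \tfrac12\|X\|^2$ subject to $AXA=A$ is equivalent to (has the same $X$-solution as) $\min_{\Gamma,X}\tfrac12\|A^\dagger - X\|^2$ subject to $X = A\Gamma A$. (ii) For any $X_k\in\mathbb{R}^{n\times n}$ and $S\in\mathbb{R}^{n\times\tau}$, the problem $$X_{k+1}=\arg\min_X \tfrac12\|X-X_k\|^2\quad\text{subject to}\quad S^\top A X A S = S^\top A S$$ is equivalent to (has the same $X$-solution as) $\min_{\Gamma,X}\tfrac12\|X-A^\dagger\|^2$ subject to $X = X_k + AS\Gamma S^\top A$. (iii) The solution of the problem in (ii) is $$X_{k+1} = X_k + AS(S^\top A^2 S)^\dagger S^\top (A - A X_k A) S (S^\top A^2 S)^\dagger S^\top A.$$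
   Context: $M^\dagger$ denotes the Moore–Penrose pseudoinverse of a real matrix $M$; $\|X\|=\sqrt{\mathrm{Tr}(X^\top X)}$. *)

From HB Require Import structures.
From mathcomp Require Import all_boot all_order all_algebra.
From mathcomp Require Import reals.
Set Implicit Arguments. Unset Strict Implicit. Unset Printing Implicit Defensive.
Import Order.TTheory GRing.Theory Num.Theory.
Local Open Scope ring_scope.

(* Moore–Penrose pseudoinverse, characterised by the four Penrose equations:
   P is the Moore–Penrose pseudoinverse of M : 'M_(m,n) (P : 'M_(n,m)). *)
Definition is_pinv (R : realType) (m n : nat) (M : 'M[R]_(m, n)) (P : 'M[R]_(n, m)) : Prop :=
  [/\ M *m P *m M = M,
      P *m M *m P = P,
      (M *m P)^T = M *m P
    & (P *m M)^T = P *m M].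

Definition frob (R : realType) (m n : nat) (X : 'M[R]_(m, n)) : R :=
  Num.sqrt (\tr (X^T *m X)).

Definition is_argmin (T : Type) (R : realType) (f : T -> R) (C : T -> Prop) (x : T) : Prop :=
  C x /\ forall y, C y -> f x <= f y.

Definition is_argmin_X (G T : Type) (R : realType)
  (f : G * T -> R) (C : G * T -> Prop) (X : T) : Prop :=
  exists g : G, is_argmin f C (g, X).

(* Each part is an orthogonal projection in the Frobenius inner product.  For
   B : n x m, the directions [B G B^T] and the matrices [V] with [B^T V B = 0]
   are orthogonal, so the affine set {X | B^T X B = B^T P B} and the affine set
   Xk + {B G B^T} meet in exactly one point Xs, and Pythagoras shows that Xs is
   both the point of the first set closest to Xk and the point of the second
   set closest to P.  For (ii) and (iii) take B = A S and P = A† (the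
   constraint S^T A X A S = S^T A S reads B^T X B = B^T A† B since A A† A = A);
   any generalized inverse Y of B^T B gives the meeting point
   Xk + B Y B^T (A† - Xk) B Y B^T.  For (i) take B = A, Xk = 0, where A†
   itself is the meeting point. *)

From HB Require Import structures.
From mathcomp Require Import all_boot all_order all_algebra.
From mathcomp Require Import reals.
Import Order.TTheory GRing.Theory Num.Theory.
Local Open Scope ring_scope.
Set Implicit Arguments. Unset Strict Implicit.

Section Frobenius.
Variable R : realType.
Implicit Types (p q : nat).

Lemma trTmx_self_sum p q (E : 'M[R]_(p, q)) :
  \tr (E^T *m E) = \sum_i \sum_j E j i ^+ 2.
Proof.
by apply: eq_bigr => i _; rewrite !mxE; apply: eq_bigr => j _; rewrite !mxE.
Qed.

Lemma trTmx_self_ge0 p q (E : 'M[R]_(p, q)) : 0 <= \tr (E^T *m E).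
Proof.
by rewrite trTmx_self_sum; do 2![apply: sumr_ge0 => ? _]; apply: sqr_ge0.
Qed.

Lemma trTmx_self_eq0 p q (E : 'M[R]_(p, q)) : (\tr (E^T *m E) == 0) = (E == 0).
Proof.
apply/idP/eqP => [|->]; last by rewrite mulmx0 mxtrace0.
rewrite trTmx_self_sum => /eqP sum0; apply/matrixP => j i; rewrite mxE; apply/eqP.
have col0 := psumr_eq0P (fun i _ => sumr_ge0 _ (fun j _ => sqr_ge0 (E j i))) sum0.
by rewrite -sqrf_eq0 (psumr_eq0P (fun j _ => sqr_ge0 (E j i)) (col0 i isT)).
Qed.

Lemma frob_sqrE p q (E : 'M[R]_(p, q)) : frob E ^+ 2 = \tr (E^T *m E).
Proof. by rewrite sqr_sqrtr // trTmx_self_ge0. Qed.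

Lemma frob_eq0 p q (E : 'M[R]_(p, q)) : (frob E == 0) = (E == 0).
Proof. by rewrite -sqrf_eq0 frob_sqrE trTmx_self_eq0. Qed.

Lemma frob0 p q : frob (0 : 'M[R]_(p, q)) = 0.
Proof. by apply/eqP; rewrite frob_eq0. Qed.

Lemma frobN p q (E : 'M[R]_(p, q)) : frob (- E) = frob E.
Proof. by rewrite /frob [(- E)^T]raddfN /= mulNmx mulmxN opprK. Qed.

Lemma trTmxC p q (U V : 'M[R]_(p, q)) : \tr (U^T *m V) = \tr (V^T *m U).
Proof. by rewrite -mxtrace_tr trmx_mul trmxK. Qed.

Lemma frob_sqrD_orth p q (U V : 'M[R]_(p, q)) : \tr (U^T *m V) = 0 ->
  frob (U + V) ^+ 2 = frob U ^+ 2 + frob V ^+ 2.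
Proof.
move=> UV0; rewrite !frob_sqrE [(U + V)^T]raddfD /= !mulmxDl !mulmxDr !mxtraceD.
by rewrite [\tr (V^T *m U)]trTmxC UV0 addr0 add0r.
Qed.

Lemma frob_sqrD_range_kernel p q (B : 'M[R]_(p, q)) (G : 'M[R]_q) (V : 'M[R]_p) :
  B^T *m V *m B = 0 ->
  frob (B *m G *m B^T + V) ^+ 2 = frob (B *m G *m B^T) ^+ 2 + frob V ^+ 2.
Proof.
move=> BVB0; apply: frob_sqrD_orth.
rewrite !trmx_mul trmxK -!mulmxA mxtrace_mulC -!mulmxA.
by rewrite (mulmxA _ V) BVB0 mulmx0 mxtrace0.
Qed.

End Frobenius.

Section Argmin.
Variable R : realType.

Lemma is_argmin_ext (T : Type) (f g : T -> R) (C D : T -> Prop) (x : T) :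
  (forall y, f y = g y) -> (forall y, C y <-> D y) ->
  is_argmin f C x <-> is_argmin g D x.
Proof.
move=> fg CD; rewrite /is_argmin CD.
by split=> -[Cx min]; split=> // y /CD Cy; [rewrite -!fg | rewrite !fg]; apply: min.
Qed.

Lemma is_argmin_X_ext (G T : Type) (f g : G * T -> R) (C D : G * T -> Prop) (x : T) :
  (forall y, f y = g y) -> (forall y, C y <-> D y) ->
  is_argmin_X f C x <-> is_argmin_X g D x.
Proof.
by move=> fg CD; split=> -[a]; exists a; apply/(is_argmin_ext _ fg CD).
Qed.

Lemma is_argmin_sqr_excess (T : Type) p q (pr : T -> 'M[R]_(p, q))
    (f : T -> R) (C : T -> Prop) (t0 t : T) :
  C t0 -> (forall y, C y -> f y = f t0 + 2^-1 * frob (pr y - pr t0) ^+ 2) ->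
  is_argmin f C t <-> C t /\ pr t = pr t0.
Proof.
move=> Ct0 excess; split=> [[Ct min]|[Ct prE]].
  split=> //; apply/eqP; rewrite -subr_eq0 -frob_eq0 -sqrf_eq0.
  have := min t0 Ct0; rewrite (excess t) // gerDl pmulr_rle0 ?invr_gt0 // => le0.
  by rewrite eq_le le0 sqr_ge0.
split=> // y Cy; rewrite (excess t) // (excess y) // prE subrr frob0 expr0n mulr0 addr0.
by rewrite lerDl mulr_ge0 ?invr_ge0 ?sqr_ge0.
Qed.

End Argmin.

Section SketchAndProject.
Variables (R : realType) (n m : nat) (B : 'M[R]_(n, m)) (P Xk Xs : 'M[R]_n).
Variable Gs : 'M[R]_m.
Hypotheses (Xs_range : Xs = Xk + B *m Gs *m B^T)
           (Xs_sketch : B^T *m Xs *m B = B^T *m P *m B).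

Lemma is_argmin_sketch X :
  is_argmin (fun X : 'M[R]_n => 2^-1 * frob (X - Xk) ^+ 2)
            (fun X => B^T *m X *m B = B^T *m P *m B) X <-> X = Xs.
Proof.
rewrite (is_argmin_sqr_excess (pr := id) (t0 := Xs) _ Xs_sketch) => [|Y BYB].
  by split=> [[]|->].
have XsE : Xs - Xk = B *m Gs *m B^T by rewrite Xs_range addrC addKr.
have -> : Y - Xk = B *m Gs *m B^T + (Y - Xs) by rewrite -XsE [RHS]addrC addrA subrK.
rewrite XsE frob_sqrD_range_kernel ?mulrDr //.
by rewrite mulmxBr mulmxBl BYB Xs_sketch subrr.
Qed.

Lemma is_argmin_X_range X :
  is_argmin_X (fun p : 'M[R]_m * 'M[R]_n => 2^-1 * frob (p.2 - P) ^+ 2)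
              (fun p => p.2 = Xk + B *m p.1 *m B^T) X <-> X = Xs.
Proof.
have excess (p : 'M[R]_m * 'M[R]_n) : p.2 = Xk + B *m p.1 *m B^T ->
    2^-1 * frob (p.2 - P) ^+ 2 = 2^-1 * frob (Xs - P) ^+ 2 + 2^-1 * frob (p.2 - Xs) ^+ 2.
  case: p => G Y /= YE.
  have YXsE : Y - Xs = B *m (G - Gs) *m B^T.
    by rewrite YE Xs_range mulmxBr mulmxBl opprD addrACA subrr add0r.
  have -> : Y - P = B *m (G - Gs) *m B^T + (Xs - P) by rewrite -YXsE addrA subrK.
  rewrite frob_sqrD_range_kernel -?YXsE ?mulrDr ?[_ + _ * frob (Y - Xs) ^+ 2]addrC //.
  by rewrite mulmxBr mulmxBl Xs_sketch subrr.
have argminE G := is_argmin_sqr_excess (pr := snd) (t0 := (Gs, Xs)) (G, X)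
  (C := fun p => p.2 = Xk + B *m p.1 *m B^T) Xs_range excess.
split=> [[G /(argminE G)[]] // | XE].
by exists Gs; apply/(argminE Gs); rewrite XE.
Qed.

End SketchAndProject.

Section GeneralizedInverse.
Variables (R : realType) (n m : nat) (B : 'M[R]_(n, m)).

Lemma mulmx_ginv_Tmul (Y : 'M[R]_m) :
  B^T *m B *m Y *m (B^T *m B) = B^T *m B -> B *m Y *m (B^T *m B) = B.
Proof.
move=> ginvY; suff /eqP : B *m (Y *m (B^T *m B) - 1%:M) = 0.
  by rewrite mulmxBr mulmx1 subr_eq0 !mulmxA => /eqP.
apply/eqP; rewrite -trTmx_self_eq0 trmx_mul -mulmxA (mulmxA B^T) mulmxBr mulmx1.
by rewrite (mulmxA (B^T *m B)) ginvY subrr mulmx0 mxtrace0.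
Qed.

Lemma Tmul_ginv_mulmx (Y : 'M[R]_m) :
  B^T *m B *m Y *m (B^T *m B) = B^T *m B -> B^T *m B *m Y *m B^T = B^T.
Proof.
move=> ginvY; have ginvYT : B^T *m B *m Y^T *m (B^T *m B) = B^T *m B.
  by have := congr1 trmx ginvY; rewrite !trmx_mul !trmxK !mulmxA.
by have := congr1 trmx (mulmx_ginv_Tmul ginvYT); rewrite !trmx_mul !trmxK !mulmxA.
Qed.

Lemma ginv_sketch_solution (Y : 'M[R]_m) (P Xk : 'M[R]_n) :
  B^T *m B *m Y *m (B^T *m B) = B^T *m B ->
  B^T *m (Xk + B *m (Y *m (B^T *m (P - Xk) *m B) *m Y) *m B^T) *m B =
  B^T *m P *m B.
Proof.
move=> ginvY; rewrite mulmxDr mulmxDl !mulmxA (Tmul_ginv_mulmx ginvY).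
rewrite -!mulmxA (mulmxA B Y) mulmx_ginv_Tmul //.
by rewrite !mulmxA -mulmxDl -mulmxDr addrC subrK.
Qed.

End GeneralizedInverse.

Section PseudoInverse.
Variables (R : realType) (m n : nat) (M : 'M[R]_(m, n)) (Pm : 'M[R]_(n, m)).
Hypothesis pinvM : is_pinv M Pm.

Lemma pinv_range : Pm = M^T *m (Pm^T *m Pm *m Pm^T) *m M^T.
Proof.
have [_ PMP MP_sym PM_sym] := pinvM.
have PmE : Pm = (Pm *m M)^T *m Pm *m (M *m Pm)^T.
  by rewrite PM_sym MP_sym !mulmxA PMP PMP.
by rewrite {1}PmE !trmx_mul !mulmxA.
Qed.

Lemma mulmxKpinv p (Z : 'M[R]_(p, m)) : Z *m M *m Pm *m M = Z *m M.
Proof. by have [MPM _ _ _] := pinvM; rewrite -!mulmxA (mulmxA M) MPM. Qed.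

End PseudoInverse.

Section SymmetricPinv.
Variables (R : realType) (n : nat) (A Ad : 'M[R]_n).
Hypotheses (symA : A^T = A) (pinvA : is_pinv A Ad).

Lemma argmin_min_norm_ginv_dual X :
  is_argmin (fun X : 'M[R]_n => 2^-1 * frob X ^+ 2) (fun X => A *m X *m A = A) X <->
  is_argmin_X (fun p : 'M[R]_n * 'M[R]_n => 2^-1 * frob (Ad - p.2) ^+ 2)
              (fun p => p.2 = A *m p.1 *m A) X.
Proof.
have Ad_range : Ad = 0 + A *m (Ad^T *m Ad *m Ad^T) *m A^T.
  by rewrite add0r {1}(pinv_range pinvA) symA.
apply: (iff_trans (B := X = Ad)).
  rewrite -(is_argmin_sketch Ad_range (erefl _)).
  have [AAdA _ _ _] := pinvA.
  by apply: is_argmin_ext => Y; [rewrite subr0 | rewrite symA AAdA].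
rewrite -(is_argmin_X_range Ad_range (erefl _)).
by apply: is_argmin_X_ext => p; [rewrite -frobN opprB | rewrite add0r symA].
Qed.

Section Sketch.
Variables (tau : nat) (Xk : 'M[R]_n) (S : 'M[R]_(n, tau)).

Let B := A *m S.
Let objective (X : 'M[R]_n) := 2^-1 * frob (X - Xk) ^+ 2.
Let constraint (X : 'M[R]_n) := S^T *m A *m X *m A *m S = S^T *m A *m S.

Let trB : B^T = S^T *m A.
Proof. by rewrite trmx_mul symA. Qed.

Lemma argmin_sketch_ginvE (Y : 'M[R]_tau) X :
  B^T *m B *m Y *m (B^T *m B) = B^T *m B ->
  is_argmin objective constraint X <->
  X = Xk + B *m (Y *m (B^T *m (Ad - Xk) *m B) *m Y) *m B^T.
Proof.
move=> ginvY; rewrite -(is_argmin_sketch erefl (ginv_sketch_solution Ad Xk ginvY)).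
apply: is_argmin_ext => // Z.
by rewrite /constraint trB /B !mulmxA (mulmxKpinv pinvA).
Qed.

Lemma argmin_sketch_dual X :
  is_argmin objective constraint X <->
  is_argmin_X (fun p : 'M[R]_tau * 'M[R]_n => 2^-1 * frob (p.2 - Ad) ^+ 2)
              (fun p => p.2 = Xk + A *m S *m p.1 *m S^T *m A) X.
Proof.
(* MathComp's [pinvmx] is not the Moore-Penrose inverse, but it is a generalized one. *)
have ginvY := mulmxKpV (submx_refl (B^T *m B)).
rewrite (argmin_sketch_ginvE _ ginvY).
rewrite -(is_argmin_X_range erefl (ginv_sketch_solution Ad Xk ginvY)).
by apply: is_argmin_X_ext => // p; rewrite trB /B !mulmxA.
Qed.

Lemma argmin_sketchE Md X :
  is_pinv (S^T *m (A *m A) *m S) Md ->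
  is_argmin objective constraint X <->
  X = Xk + A *m S *m Md *m S^T *m (A - A *m Xk *m A) *m S *m Md *m S^T *m A.
Proof.
have -> : S^T *m (A *m A) *m S = B^T *m B by rewrite trB /B !mulmxA.
case=> ginvMd _ _ _; rewrite (argmin_sketch_ginvE _ ginvMd) trB /B.
by rewrite !(mulmxBr, mulmxBl, mulmxA) (mulmxKpinv pinvA).
Qed.

End Sketch.
End SymmetricPinv.

Theorem theorem3 (R : realType) (n tau : nat) (A Ad : 'M[R]_n) :
  A^T = A -> is_pinv A Ad ->
  (* (i) *)
  (forall X : 'M[R]_n,
      is_argmin (fun X : 'M[R]_n => 2^-1 * frob X ^+ 2)
                (fun X => A *m X *m A = A) X
      <->
      is_argmin_X (fun p : 'M[R]_n * 'M[R]_n => 2^-1 * frob (Ad - p.2) ^+ 2)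
                  (fun p => p.2 = A *m p.1 *m A) X)
  /\
  (forall (Xk : 'M[R]_n) (S : 'M[R]_(n, tau)),
      (* (ii) *)
      (forall X : 'M[R]_n,
         is_argmin (fun X : 'M[R]_n => 2^-1 * frob (X - Xk) ^+ 2)
                   (fun X => S^T *m A *m X *m A *m S = S^T *m A *m S) X
         <->
         is_argmin_X (fun p : 'M[R]_tau * 'M[R]_n => 2^-1 * frob (p.2 - Ad) ^+ 2)
                     (fun p => p.2 = Xk + A *m S *m p.1 *m S^T *m A) X)
      /\
      (* (iii) *)
      (forall Md : 'M[R]_tau, is_pinv (S^T *m (A *m A) *m S) Md ->
       forall X : 'M[R]_n,
         is_argmin (fun X : 'M[R]_n => 2^-1 * frob (X - Xk) ^+ 2)
                   (fun X => S^T *m A *m X *m A *m S = S^T *m A *m S) X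
         <->
         X = Xk + A *m S *m Md *m S^T *m (A - A *m Xk *m A) *m S *m Md *m S^T *m A)).
Proof.
move=> symA pinvA; split=> [X | Xk S]; first exact: argmin_min_norm_ginv_dual.
split=> [X | Md pinvMd X]; first exact: argmin_sketch_dual.
exact: (argmin_sketchE symA pinvA Xk X pinvMd).
Qed.
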